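(* For every $M\in\mathcal{A}$ and every $k\ge\dim_{\mathbb{Q}}H_B(M)$ one has $P^k(M)=P^{k+1}(M)=\cdots=P^\infty(M)$.
   Context: Let $K\subseteq\mathbb{C}$ be a subfield and $\mathcal{A}$ a $\mathbb{Q}$-linear abelian category. A fiber functor over a field $F\supseteq\mathbb{Q}$ is a $\mathbb{Q}$-linear, exact, faithful covariant functor from $\mathcal{A}$ to finite-dimensional $F$-vector spaces. $H_B$ is a fiber functor over $\mathbb{Q}$ and $H_{dR}$ a fiber functor over $K$; $V^\vee$ is the $K$-dual, and $\alpha^\vee$ denotes the dual of $H_{dR}(\alpha)$. $H_B(M)\otimes_{\mathbb{Q}}H_{dR}(M)^\vee$ is a $K$-vector space via the second factor. For a short exact sequence $0\to N'\xrightarrow{\iota}M^m\xrightarrow{\pi}N\to0$, elements of $H_B(N')$ are regarded via $H_B(\iota)$ as elements $(\sigma_i)$ of $H_B(M)^m$, and elements of $H_{dR}(N)^\vee$ via $\pi^\vee$ as elements $(\omega_i)$ of $(H_{dR}(M)^\vee)^m$. For $k\ge1$, $P^k(M)$ is the quotient of $H_B(M)\otimes_{\mathbb{Q}}H_{dR}(M)^\vee$ by the $K$-span of all $\sum_{i=1}^m\sigma_i\otimes\omega_i$ with $m\le k$, $0\to N'\to M^m\to N\to0$ exact, $(\sigma_i)\in H_B(N')$, $(\omega_i)\in H_{dR}(N)^\vee$; the $P^k(M)$ are successive quotients and $P^\infty(M)$ is the quotient by the union of all these subspaces. *)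

From HB Require Import structures.
From mathcomp Require Import all_boot all_order all_algebra.
From mathcomp Require Import reals.
From mathcomp Require Import complex.
Set Implicit Arguments. Unset Strict Implicit. Unset Printing Implicit Defensive.
Import Order.TTheory GRing.Theory Num.Theory.
Local Open Scope ring_scope.

Record QLinCat := {
  Obj : Type;
  Mor : Obj -> Obj -> lmodType rat;
  idc : forall A, Mor A A;
  comp : forall A B C, Mor B C -> Mor A B -> Mor A C;
  compA : forall A B C D (h : Mor C D) (g : Mor B C) (f : Mor A B),
      comp h (comp g f) = comp (comp h g) f;
  comp1l : forall A B (f : Mor A B), comp (idc B) f = f;
  comp1r : forall A B (f : Mor A B), comp f (idc A) = f;
  compDl : forall A B C (a : rat) (g1 g2 : Mor B C) (f : Mor A B),
      comp (a *: g1 + g2) f = a *: comp g1 f + comp g2 f;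
  compDr : forall A B C (a : rat) (g : Mor B C) (f1 f2 : Mor A B),
      comp g (a *: f1 + f2) = a *: comp g f1 + comp g f2
}.

Arguments idc {q} A.
Arguments Mor : clear implicits.
Arguments comp {q A B C}.

Section Abelian.
Variable C : QLinCat.
Local Notation Ob := (Obj C).
Local Notation "g \oc f" := (comp g f) (at level 40, left associativity).

Definition is_kernel (K A B : Ob) (f : Mor C A B) (k : Mor C K A) : Prop :=
  f \oc k = 0 /\
  forall Z (g : Mor C Z A), f \oc g = 0 -> exists! h : Mor C Z K, k \oc h = g.

Definition is_cokernel (A B Q : Ob) (f : Mor C A B) (c : Mor C B Q) : Prop :=
  c \oc f = 0 /\
  forall Z (g : Mor C B Z), g \oc f = 0 -> exists! h : Mor C Q Z, h \oc c = g.

Definition is_mono (A B : Ob) (f : Mor C A B) : Prop :=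
  forall Z (g : Mor C Z A), f \oc g = 0 -> g = 0.

Definition is_epi (A B : Ob) (f : Mor C A B) : Prop :=
  forall Z (g : Mor C B Z), g \oc f = 0 -> g = 0.

Definition is_zero_obj (Z : Ob) : Prop :=
  (forall A (f : Mor C Z A), f = 0) /\ (forall A (f : Mor C A Z), f = 0).

Definition is_power (M : Ob) (m : nat) (X : Ob)
    (e : 'I_m -> Mor C M X) (p : 'I_m -> Mor C X M) : Prop :=
  (forall i j, p i \oc e j = if i == j then idc M else 0) /\
  \sum_(i < m) (e i \oc p i) = idc X.

Definition is_biproduct (A B X : Ob) (i1 : Mor C A X) (p1 : Mor C X A)
    (i2 : Mor C B X) (p2 : Mor C X B) : Prop :=
  [/\ p1 \oc i1 = idc A, p2 \oc i2 = idc B, p1 \oc i2 = 0, p2 \oc i1 = 0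
    & i1 \oc p1 + i2 \oc p2 = idc X].

Definition abelian : Prop :=
  [/\ (exists Z, is_zero_obj Z),
      (forall A B, exists X i1 p1 i2 p2, @is_biproduct A B X i1 p1 i2 p2),
      (forall A B (f : Mor C A B),
         (exists K (k : Mor C K A), is_kernel f k) /\
         (exists Q (c : Mor C B Q), is_cokernel f c)),
      (forall A B (f : Mor C A B), is_mono f ->
        exists Q (g : Mor C B Q), is_kernel g f)
    & (forall A B (f : Mor C A B), is_epi f ->
        exists K (g : Mor C K A), is_cokernel g f)].

Definition ses (N' X N : Ob) (i : Mor C N' X) (p : Mor C X N) : Prop :=
  is_kernel p i /\ is_cokernel i p.

(* Fiber functors, in coordinates: H(A) = 'rV[F]_(d A), and a morphism *)
(* f : A -> B acts on row vectors by v |-> v *m H f.                   *)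
Record fiber_functor (F : fieldType) (d : Ob -> nat)
    (H : forall A B, Mor C A B -> 'M[F]_(d A, d B)) : Prop := {
  ff_id : forall A, H _ _ (idc A) = 1%:M;
  ff_comp : forall A B D (g : Mor C B D) (f : Mor C A B),
      H _ _ (g \oc f) = H _ _ f *m H _ _ g;
  ff_linear : forall A B (a : rat) (f g : Mor C A B),
      H _ _ (a *: f + g) = ratr a *: H _ _ f + H _ _ g;
  ff_exact : forall N' X N (i : Mor C N' X) (p : Mor C X N), ses i p ->
      [/\ row_free (H _ _ i), row_full (H _ _ p) & (H _ _ i == kermx (H _ _ p))%MS];
  ff_faithful : forall A B (f : Mor C A B), H _ _ f = 0 -> f = 0
}.

End Abelian.

(* H_B(M) (x)_Q H_dR(M)^vee, in coordinates: 'M[K]_(dB M, dR M), with  *)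
(* sigma (x) omega |-> sigma^T omega^T. Elements of H_dR(M)^vee are    *)
(* column vectors, paired with rows by v *m omega; the dual of H_dR f  *)
(* is omega |-> H_dR f *m omega.                                       *)
Definition tens (K : fieldType) (b d : nat) (s : 'rV[rat]_b) (w : 'cV[K]_d)
  : 'M[K]_(b, d) := (map_mx ratr s)^T *m w^T.

Definition inSpan (K : fieldType) (V : lmodType K) (G : V -> Prop) (x : V) : Prop :=
  exists n (c : 'I_n -> K) (g : 'I_n -> V),
    (forall i, G (g i)) /\ x = \sum_(i < n) c i *: g i.

(* The generators sum_i sigma_i (x) omega_i coming from short exact
   sequences 0 -> N' -> M^m -> N -> 0, with m satisfying bound m. *)
Definition gens (C : QLinCat) (K : fieldType)
    (dB : Obj C -> nat) (HB : forall A B, Mor C A B -> 'M[rat]_(dB A, dB B))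
    (dR : Obj C -> nat) (HdR : forall A B, Mor C A B -> 'M[K]_(dR A, dR B))
    (bound : nat -> Prop) (M : Obj C) (x : 'M[K]_(dB M, dR M)) : Prop :=
  exists (m : nat) (X N' N : Obj C) (e : 'I_m -> Mor C M X) (p : 'I_m -> Mor C X M)
         (i : Mor C N' X) (q : Mor C X N),
    [/\ bound m, is_power e p, ses i q &
      (exists (sigma : 'rV[rat]_(dB N')) (omega : 'cV[K]_(dR N)),
        x = \sum_(j < m) tens (sigma *m HB _ _ (comp (p j) i))
                              (HdR _ _ (comp q (e j)) *m omega))].

(* the subspace killed in P^k(M) *)
Definition Rel (C : QLinCat) (K : fieldType) dB HB dR HdR (k : nat) (M : Obj C)
  : 'M[K]_(dB M, dR M) -> Prop :=
  inSpan (@gens C K dB HB dR HdR (fun m => (m <= k)%N) M).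

(* the subspace killed in P^oo(M) : union of the above = span of all gens *)
Definition RelInf (C : QLinCat) (K : fieldType) dB HB dR HdR (M : Obj C)
  : 'M[K]_(dB M, dR M) -> Prop :=
  inSpan (@gens C K dB HB dR HdR (fun _ => True) M).

Arguments gens {C K dB} HB {dR} HdR bound M x.
Arguments Rel {C K dB} HB {dR} HdR k M _.
Arguments RelInf {C K dB} HB {dR} HdR M _.

From Pilot Require Import Defs.
From HB Require Import structures.
From mathcomp Require Import all_boot all_order all_algebra.
From mathcomp Require Import reals.
From mathcomp Require Import complex.
Set Implicit Arguments. Unset Strict Implicit. Unset Printing Implicit Defensive.
Import Order.TTheory GRing.Theory Num.Theory.
Local Open Scope ring_scope.

(* Stabilization of the filtration P^k(M): for k >= dim H_B(M) every relation
   sum_i sigma_i (x) omega_i coming from a short exact sequence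
   0 -> N' -> M^m -> N -> 0 already comes from one with at most dim H_B(M)
   factors, so the relation spaces of P^k, P^(k+1), ..., P^oo coincide.

   The proof removes one factor at a time.  If m > dim H_B(M), the Betti
   components sigma_l in H_B(M) are linearly dependent, say
   sigma_r = sum_j d_j sigma_(lift r j).  The morphism
   g = p_r - sum_j d_j p_(lift r j) : M^m -> M is split, and its kernel Y is a
   power M^(m-1).  Replacing N' by the kernel N2 of Y -> M^m -> N and N by the
   image of that composite yields a new short exact sequence with m-1 factors
   producing the same tensor. *)

Local Notation "g \oc f" := (Defs.comp g f) (at level 40, left associativity).

Section QLinearCategory.
Variable C : QLinCat.

(* Composition is Q-linear in each variable; we record it as linear maps so
   that the generic linearity lemmas of the library apply. *)
Section Bilinearity.
Variables A B D : Obj C.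

Definition postcomp (g : Mor C B D) (f : Mor C A B) : Mor C A D := g \oc f.
Definition precomp (f : Mor C A B) (g : Mor C B D) : Mor C A D := g \oc f.

Fact postcomp_is_linear g : linear (postcomp g).
Proof. by move=> a f1 f2; rewrite /postcomp compDr. Qed.
HB.instance Definition _ g :=
  GRing.isLinear.Build rat _ _ _ (postcomp g) (postcomp_is_linear g).

Fact precomp_is_linear f : linear (precomp f).
Proof. by move=> a g1 g2; rewrite /precomp compDl. Qed.
HB.instance Definition _ f :=
  GRing.isLinear.Build rat _ _ _ (precomp f) (precomp_is_linear f).

Lemma comp0l (f : Mor C A B) : (0 : Mor C B D) \oc f = 0.
Proof. exact: (linear0 (precomp f)). Qed.
Lemma comp_subl (g1 g2 : Mor C B D) (f : Mor C A B) :
  (g1 - g2) \oc f = g1 \oc f - g2 \oc f.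
Proof. exact: (linearB (precomp f)). Qed.
Lemma comp_scalel a (g : Mor C B D) (f : Mor C A B) : (a *: g) \oc f = a *: (g \oc f).
Proof. exact: (linearZZ (precomp f)). Qed.
Lemma comp_suml n (g : 'I_n -> Mor C B D) (f : Mor C A B) :
  (\sum_(j < n) g j) \oc f = \sum_(j < n) g j \oc f.
Proof. exact: (linear_sum (precomp f)). Qed.

Lemma comp0r (g : Mor C B D) : g \oc (0 : Mor C A B) = 0.
Proof. exact: (linear0 (postcomp g)). Qed.
Lemma comp_subr (g : Mor C B D) (f1 f2 : Mor C A B) :
  g \oc (f1 - f2) = g \oc f1 - g \oc f2.
Proof. exact: (linearB (postcomp g)). Qed.
Lemma comp_addr (g : Mor C B D) (f1 f2 : Mor C A B) :
  g \oc (f1 + f2) = g \oc f1 + g \oc f2.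
Proof. exact: (linearD (postcomp g)). Qed.
Lemma comp_scaler a (g : Mor C B D) (f : Mor C A B) : g \oc (a *: f) = a *: (g \oc f).
Proof. exact: (linearZZ (postcomp g)). Qed.
Lemma comp_sumr n (g : Mor C B D) (f : 'I_n -> Mor C A B) :
  g \oc (\sum_(j < n) f j) = \sum_(j < n) g \oc f j.
Proof. exact: (linear_sum (postcomp g)). Qed.

End Bilinearity.

Implicit Types (A B D Y Z : Obj C).

Lemma kernel_mono A B K (f : Mor C A B) (k : Mor C K A) : is_kernel f k -> is_mono k.
Proof.
move=> [fk0 univ] Z g kg0.
have fkg0 : f \oc (k \oc g) = 0 by rewrite kg0 comp0r.
have [h [_ uniq_h]] := univ Z _ fkg0.
by rewrite -(uniq_h g erefl) (uniq_h 0) ?comp0r.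
Qed.

Lemma cokernel_epi A B Q (f : Mor C A B) (c : Mor C B Q) : is_cokernel f c -> is_epi c.
Proof.
move=> [cf0 univ] Z g gc0.
have gcf0 : (g \oc c) \oc f = 0 by rewrite gc0 comp0l.
have [h [_ uniq_h]] := univ Z _ gcf0.
by rewrite -(uniq_h g erefl) (uniq_h 0) ?comp0l.
Qed.

Lemma mono_cancel A B Z (k : Mor C A B) (g1 g2 : Mor C Z A) :
  is_mono k -> k \oc g1 = k \oc g2 -> g1 = g2.
Proof.
move=> mono_k E; apply/eqP; rewrite -subr_eq0; apply/eqP.
by apply: mono_k; rewrite comp_subr E subrr.
Qed.

Lemma epi_cancel A B Z (c : Mor C A B) (g1 g2 : Mor C B Z) :
  is_epi c -> g1 \oc c = g2 \oc c -> g1 = g2.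
Proof.
move=> epi_c E; apply/eqP; rewrite -subr_eq0; apply/eqP.
by apply: epi_c; rewrite comp_subl E subrr.
Qed.

Lemma split_epi A B (f : Mor C A B) (s : Mor C B A) : f \oc s = idc B -> is_epi f.
Proof. by move=> fs Z g gf0; rewrite -(comp1r g) -fs Defs.compA gf0 comp0l. Qed.

Lemma epi_comp A B D (g : Mor C B D) (f : Mor C A B) :
  is_epi g -> is_epi f -> is_epi (g \oc f).
Proof. by move=> epi_g epi_f Z h; rewrite Defs.compA => /epi_f; apply: epi_g. Qed.

(* The map
   retraction = p_r - sum_j d_j p_(lift r j) : X -> M is split by e_r, and its
   kernel is again a power M^n, with projections p_(lift r j) restricted to the
   kernel and injections lifting e_(lift r j) + d_j e_r. *)
Section DeleteFactor.
Variables (M X : Obj C) (n : nat) (e : 'I_n.+1 -> Mor C M X) (p : 'I_n.+1 -> Mor C X M).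
Variables (r : 'I_n.+1) (d : 'I_n -> rat).
Hypothesis power_X : is_power e p.

Definition retraction : Mor C X M := p r - \sum_(j < n) d j *: p (lift r j).

Lemma proj_inj a b : p a \oc e b = if a == b then idc M else 0.
Proof. exact: power_X.1. Qed.

Lemma lift_neq j : (lift r j == r) = false.
Proof. by rewrite eq_sym (negbTE (neq_lift _ _)). Qed.

Lemma retraction_section : retraction \oc e r = idc M.
Proof.
rewrite comp_subl comp_suml proj_inj eqxx big1 ?subr0 // => j _.
by rewrite comp_scalel proj_inj lift_neq scaler0.
Qed.

Lemma retraction_lift j : retraction \oc e (lift r j) = - (d j *: idc M).
Proof.
rewrite comp_subl comp_suml proj_inj eq_sym lift_neq sub0r (bigD1 j) //=.
rewrite comp_scalel proj_inj eqxx big1 ?addr0 // => l /negbTE ne_lj.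
by rewrite comp_scalel proj_inj (inj_eq (@lift_inj _ r)) ne_lj scaler0.
Qed.

(* The idempotent pi = 1 - e_r g
   (g the retraction) kills e_r and factors through the kernel k; composing
   the factorization with the e_(lift r j) gives the new injections. *)
Lemma power_kernel Y (k : Mor C Y X) : is_kernel retraction k ->
  exists eY : 'I_n -> Mor C M Y,
    is_power eY (fun j => p (lift r j) \oc k) /\
    forall j, k \oc eY j = e (lift r j) + d j *: e r.
Proof.
move=> ker_k; set pi := idc X - e r \oc retraction.
have ret_pi : retraction \oc pi = 0.
  by rewrite comp_subr comp1r Defs.compA retraction_section comp1l subrr.
have [s [ks _]] := ker_k.2 _ pi ret_pi.
have pi_r : pi \oc e r = 0.
  by rewrite comp_subl comp1l -Defs.compA retraction_section comp1r subrr.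
have pi_lift j : pi \oc e (lift r j) = e (lift r j) + d j *: e r.
  by rewrite comp_subl comp1l -Defs.compA retraction_lift -scaleNr comp_scaler
    comp1r scaleNr opprK.
have pi_k : pi \oc k = k.
  by rewrite comp_subl comp1l -Defs.compA ker_k.1 comp0r subr0.
have k_eY j : k \oc (s \oc e (lift r j)) = e (lift r j) + d j *: e r.
  by rewrite Defs.compA ks pi_lift.
exists (fun j => s \oc e (lift r j)); split=> //; split.
  move=> a b; rewrite -Defs.compA k_eY comp_addr comp_scaler !proj_inj.
  by rewrite (inj_eq (@lift_inj _ r)) lift_neq scaler0 addr0.
have sum_lift : \sum_(j < n) e (lift r j) \oc p (lift r j) = idc X - e r \oc p r.
  by rewrite -power_X.2 (bigD1_ord r) //= addrC addrK.
apply: (mono_cancel (kernel_mono ker_k)); rewrite comp1r comp_sumr.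
rewrite (eq_bigr (fun j => (pi \oc (e (lift r j) \oc p (lift r j))) \oc k)); last first.
  by move=> j _; rewrite !Defs.compA ks.
rewrite -comp_suml -comp_sumr sum_lift comp_subr comp1r Defs.compA pi_r comp0l.
by rewrite subr0 pi_k.
Qed.
End DeleteFactor.

Section Abelian.
Hypothesis hC : abelian C.

Lemma has_kernel A B (f : Mor C A B) : exists K (k : Mor C K A), is_kernel f k.
Proof. by case: hC => _ _ kc _ _; case: (kc _ _ f). Qed.

Lemma has_cokernel A B (f : Mor C A B) : exists Q (c : Mor C B Q), is_cokernel f c.
Proof. by case: hC => _ _ kc _ _; case: (kc _ _ f). Qed.

Lemma mono_kernel_of_cokernel A B Q (f : Mor C A B) (c : Mor C B Q) :
  is_mono f -> is_cokernel f c -> is_kernel c f.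
Proof.
case: hC => _ _ _ mono_ker _ mono_f [cf0 univ_c].
have [Q' [g [gf0 univ_g]]] := mono_ker _ _ f mono_f.
have [h [hc _]] := univ_c _ g gf0.
split=> // Z g' cg'0; apply: univ_g.
by rewrite -hc -Defs.compA cg'0 comp0r.
Qed.

Lemma epi_cokernel_of_kernel A B K (f : Mor C A B) (k : Mor C K A) :
  is_epi f -> is_kernel f k -> is_cokernel k f.
Proof.
case: hC => _ _ _ _ epi_coker epi_f [fk0 univ_k].
have [K' [g [fg0 univ_g]]] := epi_coker _ _ f epi_f.
have [h [kh _]] := univ_k _ g fg0.
split=> // Z g' g'k0; apply: univ_g.
by rewrite -kh Defs.compA g'k0 comp0l.
Qed.

Lemma ses_of_kernel_cokernel A B K Q (f : Mor C A B) (k : Mor C K A) (c : Mor C A Q) :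
  is_kernel f k -> is_cokernel k c -> ses k c.
Proof.
move=> ker_k coker_c; split=> //.
exact: mono_kernel_of_cokernel (kernel_mono ker_k) coker_c.
Qed.

Lemma ses_of_epi A B K (f : Mor C A B) (k : Mor C K A) :
  is_epi f -> is_kernel f k -> ses k f.
Proof. by move=> epi_f ker_k; split=> //; apply: epi_cokernel_of_kernel. Qed.

Lemma ses_of_mono A B (f : Mor C A B) : is_mono f -> exists Q (c : Mor C B Q), ses f c.
Proof.
move=> mono_f; have [Q [c coker_c]] := has_cokernel f.
by exists Q, c; split=> //; apply: mono_kernel_of_cokernel.
Qed.

(* The canonical map from the coimage of f to the target of f is a
   monomorphism: this is the heart of "coimage = image". *)
Lemma coimage_mono Y N N2 I (f : Mor C Y N) (k : Mor C N2 Y) (c : Mor C Y I)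
    (m : Mor C I N) :
  is_kernel f k -> is_cokernel k c -> m \oc c = f -> is_mono m.
Proof.
move=> ker_k coker_c mcf Z g mg0.
have [T [t coker_t]] := has_cokernel g.
have [m' [m't _]] := coker_t.2 _ m mg0.
have epi_c := cokernel_epi coker_c.
have epi_tc : is_epi (t \oc c) by apply: epi_comp => //; apply: cokernel_epi coker_t.
have [L [l ker_l]] := has_kernel (t \oc c).
have fl0 : f \oc l = 0 by rewrite -mcf -m't -!Defs.compA (Defs.compA t c l) ker_l.1 comp0r.
have [s [ks _]] := ker_k.2 _ l fl0.
have cl0 : c \oc l = 0 by rewrite -ks Defs.compA coker_c.1 comp0l.
have [w [wtc _]] := (epi_cokernel_of_kernel epi_tc ker_l).2 _ c cl0.
have wt1 : w \oc t = idc I by apply: (epi_cancel epi_c); rewrite -Defs.compA comp1l.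
by rewrite -(comp1l g) -wt1 -Defs.compA coker_t.1 comp0r.
Qed.

Lemma image_factorization Y N (f : Mor C Y N) :
  exists N2 I Q (k : Mor C N2 Y) (c : Mor C Y I) (m : Mor C I N) (c' : Mor C N Q),
    [/\ ses k c, ses m c' & m \oc c = f].
Proof.
have [N2 [k ker_k]] := has_kernel f.
have [I [c coker_c]] := has_cokernel k.
have [m [mcf _]] := coker_c.2 _ f ker_k.1.
have [Q [c' ses_m]] := ses_of_mono (coimage_mono ker_k coker_c mcf).
exists N2, I, Q, k, c, m, c'; split=> //.
exact: ses_of_kernel_cokernel ker_k coker_c.
Qed.

End Abelian.
End QLinearCategory.

Section FiberFunctor.
Variables (C : QLinCat) (F : fieldType) (d : Obj C -> nat).
Variable H : forall A B, Mor C A B -> 'M[F]_(d A, d B).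
Hypothesis hH : fiber_functor H.

Lemma ff_add A B (f g : Mor C A B) : H (f + g) = H f + H g.
Proof. by have := ff_linear hH 1 f g; rewrite scale1r (ratr_nat F 1) scale1r. Qed.

Lemma ff_is_zmod_morphism A B : zmod_morphism (@H A B).
Proof. by move=> f g; apply: (@addIr _ (H g)); rewrite -ff_add !subrK. Qed.
HB.instance Definition _ A B :=
  GRing.isZmodMorphism.Build _ _ (@H A B) (@ff_is_zmod_morphism A B).

Lemma ff_sub A B (f g : Mor C A B) : H (f - g) = H f - H g.
Proof. exact: raddfB. Qed.

Lemma ff0 A B : H (0 : Mor C A B) = 0.
Proof. exact: raddf0. Qed.

Lemma ff_sum A B n (f : 'I_n -> Mor C A B) : H (\sum_(j < n) f j) = \sum_(j < n) H (f j).
Proof. exact: raddf_sum. Qed.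

Lemma ff_scale A B a (f : Mor C A B) : H (a *: f) = ratr a *: H f.
Proof. by have := ff_linear hH a f 0; rewrite !addr0 raddf0 addr0. Qed.

Lemma ff_kernel_factor N' X N (k : Mor C N' X) (c : Mor C X N) (v : 'rV[F]_(d X)) :
  ses k c -> v *m H c = 0 -> exists w, v = w *m H k.
Proof.
move=> /(ff_exact hH) [_ _ /andP [_ sub_ker]] /sub_kermxP v_ker.
by apply/submxP; apply: submx_trans sub_ker.
Qed.

Lemma ff_lift_to_kernel X Y Z N N2 I Q (q : Mor C X N) (g : Mor C X Z)
    (k : Mor C Y X) (k2 : Mor C N2 Y) (c : Mor C Y I) (m : Mor C I N)
    (c' : Mor C N Q) (s : 'rV[F]_(d X)) :
  ses k g -> ses k2 c -> ses m c' -> m \oc c = q \oc k ->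
  s *m H q = 0 -> s *m H g = 0 -> exists t, s = t *m H (k \oc k2).
Proof.
move=> ses_k ses_k2 ses_m mc_qk sq0 sg0.
have [tau s_tau] := ff_kernel_factor ses_k sg0; subst s.
have [free_m _ _] := ff_exact hH ses_m.
have tau_c0 : tau *m H c = 0.
  apply: (row_free_inj free_m); rewrite mul0mx -mulmxA -(ff_comp hH) mc_qk.
  by rewrite (ff_comp hH) mulmxA sq0.
have [t ->] := ff_kernel_factor ses_k2 tau_c0.
by exists t; rewrite (ff_comp hH) mulmxA.
Qed.

End FiberFunctor.

Lemma dependent_row (F : fieldType) b n (v : 'I_n.+1 -> 'rV[F]_b) : (b <= n)%N ->
  exists r (c : 'I_n -> F), v r = \sum_(j < n) c j *: v (lift r j).
Proof.
move=> small; pose S := \matrix_l v l.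
have not_free : ~~ row_free S.
  by rewrite -row_leq_rank -ltnNge (leq_ltn_trans (rank_leq_col S)).
have [r /submxP [D dep]] := row_freePn _ not_free.
exists r, (fun j => D 0 j).
rewrite -[LHS](rowK v) -/S dep mulmx_sum_row; apply: eq_bigr => j _.
by congr (_ *: _); apply/rowP => a; rewrite !mxE.
Qed.

Lemma ratr_rat (a : rat) : ratr a = a.
Proof. exact: divq_num_den. Qed.

Section Tensors.
Variable K : fieldType.

Lemma tens_addr b d (s : 'rV[rat]_b) (w1 w2 : 'cV[K]_d) :
  tens s (w1 + w2) = tens s w1 + tens s w2.
Proof. by rewrite /tens linearD mulmxDr. Qed.

Lemma tens_scaler b d (s : 'rV[rat]_b) a (w : 'cV[K]_d) :
  tens s (a *: w) = a *: tens s w.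
Proof. by rewrite /tens linearZ /= scalemxAr. Qed.

(* When K embeds into a number field it has characteristic 0, so ratr is a
   ring morphism rat -> K and the tensor is also Q-linear in its first
   argument. *)
Variables (L : numFieldType) (emb : {rmorphism K -> L}).

Let emb_ratr (a : rat) : emb (ratr a) = ratr a.
Proof. exact: fmorph_rat. Qed.

Lemma ratr_emb_add : {morph (@ratr K) : a b / a + b}.
Proof. by move=> a b; apply: (fmorph_inj emb); rewrite [RHS]rmorphD !emb_ratr rmorphD. Qed.

Lemma ratr_emb_mul : {morph (@ratr K) : a b / a * b}.
Proof. by move=> a b; apply: (fmorph_inj emb); rewrite [RHS]rmorphM !emb_ratr rmorphM. Qed.

Lemma tens_suml b d n (c : 'I_n -> rat) (s : 'I_n -> 'rV[rat]_b) (w : 'cV[K]_d) :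
  tens (\sum_(j < n) c j *: s j) w = \sum_(j < n) ratr (c j) *: tens (s j) w.
Proof.
have map_sum : map_mx ratr (\sum_(j < n) c j *: s j)
    = \sum_(j < n) ratr (c j) *: map_mx (@ratr K) (s j).
  apply/matrixP => x y; rewrite !mxE summxE.
  rewrite (big_morph _ ratr_emb_add (ratr_nat K 0)) summxE.
  by apply: eq_bigr => j _; rewrite !mxE ratr_emb_mul.
rewrite /tens map_sum linear_sum mulmx_suml; apply: eq_bigr => j _.
by rewrite linearZ /= scalemxAl.
Qed.

End Tensors.

Lemma inSpan_mono (K : fieldType) (V : lmodType K) (G1 G2 : V -> Prop) (x : V) :
  (forall y, G1 y -> G2 y) -> inSpan G1 x -> inSpan G2 x.
Proof. by move=> sub [n [c [g [Gg ->]]]]; exists n, c, g; split=> // j; apply: sub. Qed.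

Section Generators.
Variables (C : QLinCat) (K : fieldType) (L : numFieldType) (emb : {rmorphism K -> L}).
Variables (dB : Obj C -> nat) (HB : forall A B, Mor C A B -> 'M[rat]_(dB A, dB B)).
Variables (dR : Obj C -> nat) (HdR : forall A B, Mor C A B -> 'M[K]_(dR A, dR B)).
Hypotheses (hC : abelian C) (hB : fiber_functor HB) (hdR : fiber_functor HdR).
Variable M : Obj C.

Lemma gens_mono (b1 b2 : nat -> Prop) (x : 'M[K]_(dB M, dR M)) :
  (forall m, b1 m -> b2 m) -> gens HB HdR b1 M x -> gens HB HdR b2 M x.
Proof.
move=> sub [m [X [N' [N [e [p [i [q [bm pw ses_iq gen]]]]]]]]].
by exists m, X, N', N, e, p, i, q; split=> //; apply: sub.
Qed.

Lemma gens_drop_factor n X N' N (e : 'I_n.+1 -> Mor C M X) (p : 'I_n.+1 -> Mor C X M)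
    (i : Mor C N' X) (q : Mor C X N) (sigma : 'rV[rat]_(dB N')) (omega : 'cV[K]_(dR N))
    (r : 'I_n.+1) (c : 'I_n -> rat) :
  is_power e p -> ses i q ->
  sigma *m HB (p r \oc i) = \sum_(j < n) c j *: (sigma *m HB (p (lift r j) \oc i)) ->
  gens HB HdR (fun m => m = n) M
    (\sum_(l < n.+1) tens (sigma *m HB (p l \oc i)) (HdR (q \oc e l) *m omega)).
Proof.
move=> power_X ses_iq dep.
have [Y [k ker_k]] := has_kernel hC (retraction p r c).
have [eY [power_Y k_eY]] := power_kernel power_X ker_k.
have epi_ret : is_epi (retraction p r c) := split_epi (retraction_section r c power_X).
have ses_k := ses_of_epi hC epi_ret ker_k.
have [N2 [I [Q [k2 [c' [m [c'' [ses_k2 ses_m mc_qk]]]]]]]] :=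
  image_factorization hC (q \oc k).
have [sig2 sig2_lift] : exists t, sigma *m HB i = t *m HB (k \oc k2).
  apply: (ff_lift_to_kernel hB ses_k ses_k2 ses_m mc_qk).
    by rewrite -mulmxA -(ff_comp hB) ses_iq.1.1 (ff0 hB) mulmx0.
  rewrite /retraction (ff_sub hB) (ff_sum hB) mulmxBr mulmx_sumr -mulmxA.
  rewrite -(ff_comp hB) dep; apply/eqP; rewrite subr_eq0; apply/eqP/eq_bigr => j _.
  by rewrite (ff_scale hB) ratr_rat -scalemxAr (ff_comp hB) mulmxA.
exists n, Y, N2, I, eY, (fun j => p (lift r j) \oc k), k2, c'; split=> //.
exists sig2, (HdR m *m omega).
have betti j : sig2 *m HB (p (lift r j) \oc k \oc k2) = sigma *m HB (p (lift r j) \oc i).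
  by rewrite -Defs.compA (ff_comp hB) mulmxA -sig2_lift -mulmxA -(ff_comp hB).
have de_rham j : HdR (c' \oc eY j) *m (HdR m *m omega) =
    HdR (q \oc e (lift r j)) *m omega + ratr (c j) *: (HdR (q \oc e r) *m omega).
  rewrite mulmxA -(ff_comp hdR) Defs.compA mc_qk -Defs.compA k_eY comp_addr.
  by rewrite comp_scaler (ff_add hdR) (ff_scale hdR) mulmxDl -scalemxAl.
under [RHS]eq_bigr => j _ do rewrite betti de_rham tens_addr tens_scaler.
by rewrite big_split /= -(tens_suml emb) -dep (bigD1_ord r) //= addrC.
Qed.

Lemma gens_shrink n (x : 'M[K]_(dB M, dR M)) : (dB M <= n)%N ->
  gens HB HdR (fun m => m = n.+1) M x -> gens HB HdR (fun m => m = n) M x.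
Proof.
move=> small [m [X [N' [N [e [p [i [q [m_eq power_X ses_iq [sigma [omega ->]]]]]]]]]]].
subst m; have [r [c dep]] := dependent_row (fun l => sigma *m HB (p l \oc i)) small.
exact: gens_drop_factor power_X ses_iq dep.
Qed.

Lemma gens_bounded (b : nat -> Prop) (x : 'M[K]_(dB M, dR M)) :
  gens HB HdR b M x -> gens HB HdR (fun m => (m <= dB M)%N) M x.
Proof.
have exact_bound m y : gens HB HdR (fun m' => m' = m) M y ->
    gens HB HdR (fun m' => (m' <= dB M)%N) M y.
  elim: m y => [|n IH] y gen_y; first by apply: gens_mono gen_y => m' ->.
  have [small | large] := leqP n.+1 (dB M).
    by apply: gens_mono gen_y => m' ->.
  by apply/IH/gens_shrink.
move=> [m [X [N' [N [e [p [i [q [_ power_X ses_iq gen]]]]]]]]].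
by apply: (exact_bound m); exists m, X, N', N, e, p, i, q.
Qed.

End Generators.

Theorem mainTheorem3 (C : QLinCat) (hC : abelian C)
    (R : realType) (K : fieldType) (embK : {rmorphism K -> R[i]})
    (dB : Obj C -> nat) (HB : forall A B, Mor C A B -> 'M[rat]_(dB A, dB B))
    (hB : fiber_functor HB)
    (dR : Obj C -> nat) (HdR : forall A B, Mor C A B -> 'M[K]_(dR A, dR B))
    (hdR : fiber_functor HdR)
    (M : Obj C) (k : nat) :
  (1 <= k)%N -> (dB M <= k)%N ->
  (forall j, (k <= j)%N ->
     forall x, Rel HB HdR j M x <-> Rel HB HdR k M x) /\
  (forall x, RelInf HB HdR M x <-> Rel HB HdR k M x).
Proof.
move=> _ large_k.
have to_k b y : gens HB HdR b M y -> gens HB HdR (fun m => (m <= k)%N) M y.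
  move=> /(gens_bounded embK hC hB hdR); apply: gens_mono => m le_m.
  exact: leq_trans large_k.
split=> [j le_kj x | x]; split; apply: inSpan_mono => y; try exact: to_k.
- by apply: gens_mono => m le_mk; apply: leq_trans le_kj.
- exact: gens_mono.
Qed.
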